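(* Let $\mathbb{F}$ be a field with $\mathrm{char}(\mathbb{F})\neq 2,3$. Let $I$ be a non-zero ideal of $\hat{\mathcal{H}}$ contained in $J$, and let $x$ be a non-zero element of $I$ of minimal $J$-degree, with $p$-level $3k$. Then $I$ has codimension $2(k-1)$ in $J$.
   Context: Notation: $\mathbb{N}=\{1,2,3,\dots\}$, $3\mathbb{N}=\{3,6,9,\dots\}$; for $r\in\mathbb{Z}$, $\bar r=r+3\mathbb{Z}\in\mathbb{Z}_3$. The algebra $\hat{\mathcal{H}}$ is the commutative $\mathbb{F}$-algebra with basis $\{a_i:i\in\mathbb{Z}\}\cup\{s_j:j\in\mathbb{N}\}\cup\{p_{\bar r,k}:\bar r\in\{\bar1,\bar2\},\ k\in 3\mathbb{N}\}$, where $s_0=0$, $p_{\bar r,j}=0$ for all $\bar r$ whenever $j\notin 3\mathbb{N}$, $p_{\bar 0,j}=-p_{\bar1,j}-p_{\bar2,j}$, $z_{\bar r,j}=p_{\bar r+\bar1,j}-p_{\bar r-\bar1,j}$, and for $i,i'\in\mathbb{Z}$, $j,l\in\mathbb{N}$, $h,k\in3\mathbb{N}$, $\bar r,\bar t\in\mathbb{Z}_3$: (H1) $a_ia_{i'}=\tfrac12(a_i+a_{i'})+s_{|i-i'|}+z_{\bar\imath,|i-i'|}$; (H2) $a_is_j=-\tfrac34a_i+\tfrac38(a_{i-j}+a_{i+j})+\tfrac32 s_j-z_{\bar\imath,j}$; (H3) $a_ip_{\bar r,k}=\tfrac32p_{\bar r,k}-p_{-(\bar\imath+\bar r),k}$;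 (H4) $s_js_l=\tfrac34(s_j+s_l)-\tfrac38(s_{|j-l|}+s_{j+l})$; (H5) $s_jp_{\bar r,k}=\tfrac34(p_{\bar r,j}+p_{\bar r,k})-\tfrac38(p_{\bar r,|j-k|}+p_{\bar r,j+k})$; (H6) $p_{\bar r,h}p_{\bar t,k}=\tfrac14(z_{-(\bar r+\bar t),h}+z_{-(\bar r+\bar t),k})-\tfrac18(z_{-(\bar r+\bar t),|h-k|}+z_{-(\bar r+\bar t),h+k})$. $J=\langle p_{\bar1,j},p_{\bar2,j}:j\in3\mathbb{N}\rangle$ (an ideal). Every non-zero $x\in J$ is uniquely $x=\sum_{j\in3\mathbb{N},\,j\le 3m}\sum_{\bar r\in\{\bar1,\bar2\}}\beta_{\bar r,j}p_{\bar r,j}$ with $\beta_{\bar r,3m}\neq0$ for some $\bar r$; its $p$-level is $3m$ and its $J$-degree is $3m+\sum_{r\in\{1,2\},\ \beta_{\bar r,3m}\neq0}\tfrac r4$. *)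

(* The algebra \hat{H} is modelled as the free F-vector space
   {malg F[hbasis]} (finitely supported functions hbasis -> F, multinomials'
   monalg) on the index set of its basis, with the bilinear extension of the
   product table (H1)-(H6). *)
From HB Require Import structures.
From mathcomp Require Import all_boot all_order all_algebra.
From mathcomp Require Import finmap.
From mathcomp Require Import monalg.
Set Implicit Arguments. Unset Strict Implicit. Unset Printing Implicit Defensive.
Import Order.TTheory GRing.Theory Num.Theory.

(* Basis index set:
     HA i     <->  a_i              (i : int)
     HS j     <->  s_{j+1}          (so j+1 ranges over N = {1,2,...})
     HP b m   <->  p_{r, 3(m+1)}    with r = 1 if b = false, r = 2 if b = true *)
Inductive hbasis : Type :=
| HA of int
| HS of nat
| HP of bool & nat.

Definition hb_enc (b : hbasis) : (int + nat) + (bool * nat) :=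
  match b with
  | HA i => inl (inl i)
  | HS j => inl (inr j)
  | HP r m => inr (r, m)
  end.
Definition hb_dec (c : (int + nat) + (bool * nat)) : hbasis :=
  match c with
  | inl (inl i) => HA i
  | inl (inr j) => HS j
  | inr (r, m) => HP r m
  end.
Lemma hb_encK : cancel hb_enc hb_dec. Proof. by case. Qed.
HB.instance Definition _ := Equality.copy hbasis (can_type hb_encK).
HB.instance Definition _ := Choice.copy hbasis (can_type hb_encK).
HB.instance Definition _ := Countable.copy hbasis (can_type hb_encK).

Local Open Scope ring_scope.

Section Hhat.
Variable F : fieldType.

Definition Hhat := {malg F[hbasis]}.

Definition hvec (b : hbasis) : Hhat := << (1 : F) *g b >>.

Definition ha (i : int) : Hhat := hvec (HA i).

(* s_j for j : nat, with the convention s_0 = 0 *)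
Definition hs (j : nat) : Hhat := if j is j'.+1 then hvec (HS j') else 0.

(* p_{r̄, j} for r : int (read modulo 3) and j : nat, with the conventions
   p_{r̄,j} = 0 if j ∉ 3N, and p_{0̄,j} = - p_{1̄,j} - p_{2̄,j}. *)
Definition hp (r : int) (j : nat) : Hhat :=
  if (0 < j)%N && (3 %| j)%N then
    let m := (j %/ 3).-1 in
    if (r %% 3)%Z == 1 then hvec (HP false m)
    else if (r %% 3)%Z == 2 then hvec (HP true m)
    else - hvec (HP false m) - hvec (HP true m)
  else 0.

Definition hz (r : int) (j : nat) : Hhat := hp (r + 1) j - hp (r - 1) j.

Definition bmul (b c : hbasis) : Hhat :=
  match b, c with
  | HA i, HA i' =>
      2^-1 *: (ha i + ha i') + hs `|i - i'|%N + hz i `|i - i'|%N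
  | HA i, HS j' | HS j', HA i =>
      let j := j'.+1 in
      (- (3 / 4)) *: ha i + (3 / 8) *: (ha (i - j%:Z) + ha (i + j%:Z))
        + (3 / 2) *: hs j - hz i j
  | HA i, HP b m | HP b m, HA i =>
      let r : int := if b then 2 else 1 in
      let k := (3 * m.+1)%N in
      (3 / 2) *: hp r k - hp (- (i + r)) k
  | HS j', HS l' =>
      let j := j'.+1 in let l := l'.+1 in
      (3 / 4) *: (hs j + hs l) - (3 / 8) *: (hs `|j - l|%N + hs (j + l))
  | HS j', HP b m | HP b m, HS j' =>
      let j := j'.+1 in
      let r : int := if b then 2 else 1 in
      let k := (3 * m.+1)%N in
      (3 / 4) *: (hp r j + hp r k) - (3 / 8) *: (hp r `|j - k|%N + hp r (j + k))
  | HP b m, HP b' m' =>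
      let r : int := if b then 2 else 1 in
      let t : int := if b' then 2 else 1 in
      let h := (3 * m.+1)%N in let k := (3 * m'.+1)%N in
      4^-1 *: (hz (- (r + t)) h + hz (- (r + t)) k)
        - 8^-1 *: (hz (- (r + t)) `|h - k|%N + hz (- (r + t)) (h + k))
  end.

Definition hmul (x y : Hhat) : Hhat :=
  \sum_(b <- msupp x) \sum_(c <- msupp y) (x@_b * y@_c) *: bmul b c.

Definition is_hp (b : hbasis) : bool := if b is HP _ _ then true else false.

(* membership in J = span{ p_{1̄,j}, p_{2̄,j} : j ∈ 3N } *)
Definition inJ (x : Hhat) : Prop := forall b, ~~ is_hp b -> x@_b = 0.

Definition is_ideal (I : Hhat -> Prop) : Prop :=
  [/\ I 0,
      (forall x y, I x -> I y -> I (x + y)),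
      (forall (c : F) x, I x -> I (c *: x)) &
      (forall h x, I x -> I (hmul h x))].

(* coefficient beta_{r̄, j} of x on p_{r̄,j}, r : bool (false = 1̄, true = 2̄) *)
Definition pcoef (x : Hhat) (r : bool) (j : nat) : F :=
  if (0 < j)%N && (3 %| j)%N then x@_(HP r (j %/ 3).-1) else 0.

Definition blevel (b : hbasis) : nat := if b is HP _ m then (3 * m.+1)%N else 0%N.

Definition plevel (x : Hhat) : nat := \max_(b <- msupp x) blevel b.

Definition jdegree (x : Hhat) : rat :=
  (plevel x)%:R
  + (if pcoef x false (plevel x) != 0 then 1 / 4 else 0)
  + (if pcoef x true (plevel x) != 0 then 2 / 4 else 0).

(* I ⊆ J has codimension n in J: dim (J / I) = n, witnessed by n elements of J
   which are linearly independent modulo I and span J modulo I. *)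
Definition codim_in_J (I : Hhat -> Prop) (n : nat) : Prop :=
  exists v : 'I_n -> Hhat,
    [/\ (forall i, inJ (v i)),
        (forall c : 'I_n -> F, I (\sum_i c i *: v i) -> forall i, c i = 0) &
        (forall y, inJ y -> exists c : 'I_n -> F, I (y - \sum_i c i *: v i))].

End Hhat.

(* Up to the factor 3/2, multiplication by a_i acts on the p's by the reflection
   r ↦ -(i + r) of residues mod 3 (H3), and multiplication by s_3 sends p_{r,j} to
   -(3/8) p_{r,j+3} plus terms of lower p-level (H5).  If the leading part of x is
   α p_{1,3k} + β p_{2,3k}, then x plus a reflection of x has leading part
   (2α - β) p_{1,3k} or (2β - α) p_{2,3k}, and 3α = 2(2α - β) + (2β - α) shows one
   of these is non-zero; reflecting by a_0 swaps the two residues.  So I contains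
   elements with leading part p_{r,3k} for both r, and, multiplying by s_3, with
   leading part p_{r,j} for every j ≥ 3k.  Hence the 2(k-1) vectors p_{r,j} with
   j < 3k span J modulo I; they are independent modulo I because a non-zero
   element of I of p-level below 3k has J-degree below 3k, which is at most the
   J-degree of x. *)

From HB Require Import structures.
From mathcomp Require Import all_boot all_order all_algebra.
From mathcomp Require Import finmap.
From mathcomp Require Import monalg.
From mathcomp Require Import zify ring lra.
Import Order.TTheory GRing.Theory Num.Theory.
Set Implicit Arguments. Unset Strict Implicit. Unset Printing Implicit Defensive.
Local Open Scope ring_scope.

Section Product.
Variable F : fieldType.
Local Notation H := (Hhat F).
Local Notation p b m := (hvec F (HP b m)).

Lemma mcoeff_hvec b c : (hvec F b)@_c = (b == c)%:R.
Proof. by rewrite /hvec mcoeffU. Qed.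

Lemma eq_HP b m b' m' : (HP b m == HP b' m') = (b == b') && (m == m').
Proof. by apply/eqP/andP => [[-> ->]|[/eqP-> /eqP->]]. Qed.

Lemma msupp_hvec b : msupp (hvec F b) = [fset b]%fset.
Proof. by rewrite /hvec msuppU oner_eq0. Qed.

Lemma malg_hvecE (y : H) : y = \sum_(c <- msupp y) y@_c *: hvec F c.
Proof.
rewrite {1}(monalgE y); apply: eq_bigr => c _; apply/malgP => c'.
by rewrite mcoeffZ mcoeff_hvec mcoeffU mulr_natr.
Qed.

Lemma hmul_fsubset (h y : H) (d : {fset hbasis}) : (msupp y `<=` d)%fset ->
  hmul h y = \sum_(b <- msupp h) \sum_(c <- d) (h@_b * y@_c) *: bmul F b c.
Proof.
move=> yd; apply: eq_bigr => b _; apply: big_fset_incl => // c _ /mcoeff_outdom ->.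
by rewrite mulr0 scale0r.
Qed.

Lemma hmul_linear (h : H) : linear (hmul h).
Proof.
move=> a y z; set d := (msupp y `|` msupp z)%fset.
have yd : (msupp y `<=` d)%fset by apply: fsubsetUl.
have zd : (msupp z `<=` d)%fset by apply: fsubsetUr.
have ayzd : (msupp (a *: y + z) `<=` d)%fset.
  by apply: fsubset_trans (msuppD_le _ _) _; apply: fsetUSS => //; apply: msuppZ_le.
rewrite !(hmul_fsubset h ayzd, hmul_fsubset h yd, hmul_fsubset h zd).
rewrite scaler_sumr -big_split; apply: eq_bigr => b _ /=.
rewrite scaler_sumr -big_split; apply: eq_bigr => c _ /=.
rewrite mcoeffD mcoeffZ scalerA -scalerDl; congr (_ *: _); ring.
Qed.

HB.instance Definition _ (h : H) :=
  GRing.isLinear.Build F H H *:%R (hmul h) (hmul_linear h).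

Lemma hmul_hvec b c : hmul (hvec F b) (hvec F c) = bmul F b c.
Proof. by rewrite /hmul !msupp_hvec !big_seq_fset1 /hvec !mcoeffUU mulr1 scale1r. Qed.

Definition below_level (m : nat) (b : hbasis) : bool :=
  if b is HP _ m' then (m' < m)%N else false.

(* [Jle m] is the part of J of p-level at most 3m; [HP b m'] has p-level 3(m'+1). *)
Definition Jle_pred (m : nat) : pred H := fun y => all (below_level m) (msupp y).
Arguments Jle_pred _ _ /.
Definition Jle (m : nat) : qualifier 0 H := [qualify y | Jle_pred m y].

Lemma JleP m (y : H) :
  reflect (forall b, ~~ below_level m b -> y@_b = 0) (y \is Jle m).
Proof.
apply: (iffP allP) => [yJ b | yJ b]; last first.
  by rewrite -mcoeff_neq0; apply: contraR => /yJ ->.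
by apply: contraNeq; rewrite mcoeff_neq0 => /yJ.
Qed.

Lemma Jle_submod_closed m : submod_closed (Jle m).
Proof.
split=> [|a y z /JleP yJ /JleP zJ]; apply/JleP => b bm.
  by rewrite mcoeff0.
by rewrite mcoeffD mcoeffZ yJ ?zJ ?mulr0 ?addr0.
Qed.

HB.instance Definition _ m :=
  GRing.isSubmodClosed.Build F H (Jle_pred m) (Jle_submod_closed m).

Lemma Jle_hvec m b : below_level m b -> hvec F b \is Jle m.
Proof. by move=> bm; rewrite qualifE /= msupp_hvec; apply/allP => c /fset1P ->. Qed.

Lemma Jle_inJ m (y : H) : y \is Jle m -> inJ y.
Proof. by move/JleP=> yJ b bJ; apply: yJ; case: b bJ. Qed.

Lemma Jle_mono m n (y : H) : (m <= n)%N -> y \is Jle m -> y \is Jle n.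
Proof.
move=> mn /allP yJ; apply/allP => b /yJ.
by case: b => //= _ m' /leq_trans; apply.
Qed.

Lemma Jle0_eq0 (y : H) : y \is Jle 0 -> y = 0.
Proof. by move/JleP=> yJ; apply/malgP => b; rewrite mcoeff0 yJ //; case: b. Qed.

Lemma Jle_drop_top m (y : H) : y \is Jle m.+1 ->
  y - (y@_(HP false m) *: hvec F (HP false m) + y@_(HP true m) *: hvec F (HP true m))
    \is Jle m.
Proof.
move/JleP=> yJ; apply/JleP => c cm; rewrite opprD addrA !mcoeffB !mcoeffZ !mcoeff_hvec.
case: c cm => [i|j|b m'] /= cm; try by rewrite yJ // !mulr0 !subr0.
rewrite !eq_HP; have [<-|m'm] := eqVneq m' m.
  by case: b; rewrite /= ?mulr1 ?mulr0 ?subr0 ?subrr ?sub0r.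
by rewrite yJ /= ?andbF ?mulr0 ?subr0 // ltnS leq_eqVlt (negbTE m'm).
Qed.

Lemma Jle_plevel m (y : H) : y \is Jle m -> (plevel y <= 3 * m)%N.
Proof.
move/allP=> yJ; apply/bigmax_leqP_seq => c /yJ.
by case: c => //= _ m' m'm _; rewrite leq_pmul2l.
Qed.

Lemma plevel_Jle m (y : H) : inJ y -> (plevel y <= 3 * m)%N -> y \is Jle m.
Proof.
move=> yJ ylev; apply/allP => c cy.
have cl : (blevel c <= 3 * m)%N by apply: leq_trans ylev; apply: leq_bigmax_seq.
move: cy; rewrite -mcoeff_neq0; case: c cl => [i|j|b m'] /=; try by rewrite yJ ?eqxx.
by rewrite leq_pmul2l.
Qed.

Lemma Jle_linear_image (f : {linear H -> H}) m n :
  (forall b m', (m' < m)%N -> f (hvec F (HP b m')) \is Jle n) ->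
  forall y, y \is Jle m -> f y \is Jle n.
Proof.
move=> fJ y /allP yJ; rewrite (malg_hvecE y) linear_sum big_seq rpred_sum // => c cy.
by rewrite linearZ rpredZ //; move: (yJ c cy); case: c {cy} => //= b m' /fJ.
Qed.

Definition presidue (b : bool) : int := if b then 2 else 1.

Lemma hp_level r m : hp F r (3 * m.+1) =
  if (r %% 3)%Z == 1 then p false m else if (r %% 3)%Z == 2 then p true m
  else - p false m - p true m.
Proof. by rewrite /hp muln_gt0 dvdn_mulr //= mulKn. Qed.

Lemma hp_presidue b m : hp F (presidue b) (3 * m.+1) = p b m.
Proof. by rewrite hp_level; case: b. Qed.

Lemma hp_Jle r j m : (j <= 3 * m)%N -> hp F r j \is Jle m.
Proof.
rewrite /hp; case: ifP => [/andP[j0 j3] jm|]; last by rewrite rpred0.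
have pJ b : p b (j %/ 3).-1 \is Jle m by apply: Jle_hvec => /=; lia.
by case: ifP => _; [|case: ifP => _]; rewrite ?rpredB ?rpredN.
Qed.

Definition flip (i : int) (y : H) : H := (3 / 2) *: y - hmul (ha F i) y.

Lemma flip_linear i : linear (flip i).
Proof.
move=> a y z; rewrite /flip !linearP; apply/malgP => c.
by rewrite !(mcoeffD, mcoeffN, mcoeffZ); ring.
Qed.

HB.instance Definition _ i := GRing.isLinear.Build F H H *:%R (flip i) (flip_linear i).

Lemma flip_p i b m : flip i (p b m) = hp F (- (i + presidue b)) (3 * m.+1).
Proof. by rewrite /flip /ha hmul_hvec /= -/(presidue b) hp_presidue opprB addrC subrK. Qed.

Lemma flip_presidue b m : flip (presidue b) (p b m) = p b m.
Proof. by rewrite flip_p hp_level; case: b. Qed.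

Lemma flip_presidue_other b m : flip (presidue b) (p (~~ b) m) = - p false m - p true m.
Proof. by rewrite flip_p hp_level; case: b. Qed.

Lemma flip0 b m : flip 0 (p b m) = p (~~ b) m.
Proof. by rewrite flip_p hp_level; case: b. Qed.

Lemma flip_top_sum m (c : bool -> F) b :
  c false *: p false m + c true *: p true m
  + flip (presidue b) (c false *: p false m + c true *: p true m)
  = (2 * c b - c (~~ b)) *: p b m.
Proof.
rewrite linearD !linearZ /=; apply/malgP => k.
case: b; rewrite flip_presidue (flip_presidue_other _ m).
all: by rewrite !(mcoeffD, mcoeffN, mcoeffZ); ring.
Qed.

Lemma flip_Jle i m (y : H) : y \is Jle m -> flip i y \is Jle m.
Proof.
by apply: Jle_linear_image => b m' m'm; rewrite /= flip_p hp_Jle // leq_pmul2l.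
Qed.

Definition shift (y : H) : H := hmul (hs F 3) y.

HB.instance Definition _ := GRing.isLinear.Build F H H *:%R shift (hmul_linear (hs F 3)).

Lemma shift_p b m : shift (p b m) + (3 / 8) *: p b m.+1 \is Jle m.+1.
Proof.
rewrite /shift /hs hmul_hvec /= -/(presidue b).
have -> : (3 + 3 * m.+1 = 3 * m.+2)%N by lia.
rewrite !hp_presidue [(3 / 8) *: (_ + _)]scalerDr opprD addrA subrK.
have pJ : p b m \is Jle m.+1 by apply: Jle_hvec => /=.
by rewrite rpredB ?rpredZ ?rpredD ?pJ ?hp_Jle //; lia.
Qed.

Lemma shift_Jle m (y : H) : y \is Jle m -> shift y \is Jle m.+1.
Proof.
apply: Jle_linear_image => b m' m'm /=.
rewrite -[shift _](addrK ((3 / 8) *: p b m'.+1)).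
apply: (@Jle_mono m'.+2) => //; rewrite rpredB ?rpredZ ?Jle_hvec //=.
exact: Jle_mono (shift_p b m').
Qed.

Lemma jdegree_bounds (y : H) :
  (plevel y)%:R <= jdegree y /\ jdegree y <= (plevel y)%:R + 3 / 4.
Proof. by rewrite /jdegree; case: ifP => _; case: ifP => _; split; lra. Qed.

Lemma jdegree_Jle_lt m (x y : H) :
  y \is Jle m -> (3 * m.+1 <= plevel x)%N -> jdegree y < jdegree x.
Proof.
move=> /Jle_plevel ylev xlev.
have [xlo _] := jdegree_bounds x; have [_ yhi] := jdegree_bounds y.
have : (plevel y)%:R + 3 <= (plevel x)%:R :> rat.
  by rewrite -natrD ler_nat; lia.
lra.
Qed.

End Product.

Arguments Jle {F} m.

Section Ideal.
Variables (F : fieldType) (I : Hhat F -> Prop).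
Hypothesis idealI : is_ideal I.
Local Notation H := (Hhat F).
Local Notation p b m := (hvec F (HP b m)).

Lemma ideal0 : I 0.
Proof. by case: idealI => I0. Qed.

Lemma idealD y z : I y -> I z -> I (y + z).
Proof. by case: idealI => _ ID _ _; apply: ID. Qed.

Lemma idealZ a y : I y -> I (a *: y).
Proof. by case: idealI => _ _ IZ _; apply: IZ. Qed.

Lemma ideal_hmul h y : I y -> I (hmul h y).
Proof. by case: idealI => _ _ _ IM; apply: IM. Qed.

Lemma ideal_flip i y : I y -> I (flip i y).
Proof.
by move=> Iy; rewrite /flip -scaleN1r; apply: idealD; apply: idealZ => //; apply: ideal_hmul.
Qed.

Definition has_leading b m := exists2 g, I g & g - p b m \is Jle m.

Lemma has_leading_scale b m d u :
  d != 0 -> I u -> u - d *: p b m \is Jle m -> has_leading b m.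
Proof.
move=> d0 Iu uJ; exists (d^-1 *: u); first exact: idealZ.
by rewrite -[p b m](scalerK d0) -scalerBr rpredZ.
Qed.

Lemma has_leading_flip0 b m : has_leading b m -> has_leading (~~ b) m.
Proof.
case=> g Ig gJ; exists (flip 0 g); first exact: ideal_flip.
by rewrite -(flip0 F b) -linearB flip_Jle.
Qed.

Lemma has_leading_of_top m x (c : bool -> F) b :
  I x -> x - (c false *: p false m + c true *: p true m) \is Jle m ->
  2 * c b - c (~~ b) != 0 -> has_leading b m.
Proof.
move=> Ix xJ cb; apply: (has_leading_scale cb (u := x + flip (presidue b) x)).
  by apply: idealD => //; apply: ideal_flip.
rewrite -flip_top_sum opprD addrACA -linearB.
by rewrite rpredD ?flip_Jle.
Qed.

Lemma has_leading_top m x (c : bool -> F) :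
  (3%:R : F) != 0 -> I x ->
  x - (c false *: p false m + c true *: p true m) \is Jle m ->
  (c false != 0) || (c true != 0) -> forall b, has_leading b m.
Proof.
move=> n3 Ix xJ c0.
suff [b' lead] : exists b', has_leading b' m.
  by move=> b; case: b b' lead => [] [] // lead; apply: has_leading_flip0 lead.
have [/eqP cf|cf] := boolP (2 * c false - c true == 0); last first.
  by exists false; exact: has_leading_of_top Ix xJ cf.
have [/eqP ct|ct] := boolP (2 * c true - c false == 0); last first.
  by exists true; exact: has_leading_of_top Ix xJ ct.
have : 3%:R * c false = 2 * (2 * c false - c true) + (2 * c true - c false) by ring.
rewrite cf ct mulr0 addr0 => /eqP; rewrite mulf_eq0 (negPf n3) /= => /eqP c0f.
by move: c0 cf; rewrite c0f eqxx mulr0 sub0r /= => /negPf ct0 /eqP; rewrite oppr_eq0 ct0.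
Qed.

Lemma has_leading_shift b m :
  (2%:R : F) != 0 -> (3%:R : F) != 0 -> has_leading b m -> has_leading b m.+1.
Proof.
move=> n2 n3 [g Ig gJ].
have c0 : - (3 / 8) != 0 :> F.
  rewrite oppr_eq0 mulf_neq0 ?invr_eq0 // (_ : 8 = 2 * 2 * 2) ?mulf_neq0 //.
  by rewrite -!natrM.
apply: (has_leading_scale c0 (ideal_hmul _ Ig : I (shift g))).
have -> : shift g - - (3 / 8) *: p b m.+1 = shift (g - p b m) + (shift (p b m) + (3 / 8) *: p b m.+1).
  by rewrite linearB scaleNr opprK addrA subrK.
by rewrite rpredD ?shift_p ?shift_Jle.
Qed.

Lemma has_leading_ge K :
  (2%:R : F) != 0 -> (3%:R : F) != 0 -> (forall b, has_leading b K) ->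
  forall b m, (K <= m)%N -> has_leading b m.
Proof.
move=> n2 n3 lead b m /subnK <-.
by elim: (m - K)%N => [|n IH] //; apply: has_leading_shift.
Qed.

Section Span.
Variables (n : nat) (v : 'I_n -> H).

Definition in_I_span y := exists c : 'I_n -> F, I (y - \sum_i c i *: v i).

Lemma in_I_span_ideal y : I y -> in_I_span y.
Proof.
by move=> Iy; exists (fun=> 0); rewrite big1 ?subr0 // => i _; rewrite scale0r.
Qed.

Lemma in_I_span_gen i : in_I_span (v i).
Proof.
exists (fun j => (j == i)%:R); rewrite (bigD1 i) //= eqxx scale1r big1 ?addr0 ?subrr.
  exact: ideal0.
by move=> j /negPf ->; rewrite scale0r.
Qed.

Lemma in_I_spanD y z : in_I_span y -> in_I_span z -> in_I_span (y + z).
Proof.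
move=> [c Iy] [d Iz]; exists (fun i => c i + d i).
rewrite (eq_bigr _ (fun i _ => scalerDl _ _ _)) big_split opprD addrACA.
exact: idealD.
Qed.

Lemma in_I_spanZ a y : in_I_span y -> in_I_span (a *: y).
Proof.
move=> [c Iy]; exists (fun i => a * c i).
rewrite (eq_bigr _ (fun i _ => esym (scalerA _ _ _))) -scaler_sumr -scalerBr.
exact: idealZ.
Qed.

End Span.

Definition pbasis K (i : 'I_(2 * K)) : H := p (odd i) i./2.

Lemma pbasis_Jle K (i : 'I_(2 * K)) : pbasis i \is Jle K.
Proof. by apply: Jle_hvec; rewrite /= ltn_half_double -mul2n. Qed.

Lemma mcoeff_pbasis_sum K (c : 'I_(2 * K) -> F) (i : 'I_(2 * K)) :
  (\sum_j c j *: pbasis j)@_(HP (odd i) i./2) = c i.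
Proof.
rewrite raddf_sum (bigD1 i) //= mcoeffZ mcoeff_hvec eqxx mulr1 big1 ?addr0 //.
move=> j ji; rewrite mcoeffZ mcoeff_hvec eq_HP.
case: eqP => [oj|]; last by rewrite mulr0.
case: eqP => [hj|]; last by rewrite mulr0.
by case/eqP: ji; apply: val_inj; rewrite /= -[val j]odd_double_half -[val i]odd_double_half oj hj.
Qed.

Lemma p_in_I_span_pbasis K b m : (m < K)%N -> in_I_span (@pbasis K) (p b m).
Proof.
move=> mK; have bmK : (b + m.*2 < 2 * K)%N by case: b; rewrite /= -mul2n; lia.
have := in_I_span_gen (@pbasis K) (Ordinal bmK).
by rewrite /pbasis /= oddD odd_double addbF oddb half_bit_double.
Qed.

Lemma Jle_in_I_span K :
  (forall b m, (K <= m)%N -> has_leading b m) ->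
  forall m y, y \is Jle m -> in_I_span (@pbasis K) y.
Proof.
move=> lead; elim=> [|m IH] y yJ; first by rewrite (Jle0_eq0 yJ); apply/in_I_span_ideal/ideal0.
have pS b : in_I_span (@pbasis K) (p b m).
  have [mK|Km] := ltnP m K; first exact: p_in_I_span_pbasis.
  have [g Ig gJ] := lead b m Km.
  rewrite -[p b m](subKr g) -scaleN1r.
  by apply: in_I_spanD; [exact: in_I_span_ideal | apply: in_I_spanZ; exact: IH].
rewrite -[y](subrK (y@_(HP false m) *: p false m + y@_(HP true m) *: p true m)).
by apply: in_I_spanD; [apply: IH; apply: Jle_drop_top
  | apply: in_I_spanD; apply: in_I_spanZ].
Qed.

Lemma codim_in_J_of_leading K :
  (forall y, I y -> y \is Jle K -> y = 0) ->
  (forall b m, (K <= m)%N -> has_leading b m) -> codim_in_J I (2 * K).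
Proof.
move=> IJle0 lead; exists (@pbasis K); split.
- by move=> i; apply: Jle_inJ (pbasis_Jle i).
- move=> c Ic i; rewrite -(mcoeff_pbasis_sum c i) (IJle0 _ Ic) ?mcoeff0 //.
  by rewrite rpred_sum // => j _; rewrite rpredZ ?pbasis_Jle.
- move=> y yJ; apply: (Jle_in_I_span lead (m := plevel y)).
  by apply: plevel_Jle; rewrite ?leq_pmull.
Qed.

End Ideal.

Theorem corollary7p3 (F : fieldType) (char2 : (2 \notin [pchar F])%N)
  (char3 : (3 \notin [pchar F])%N)
  (I : Hhat F -> Prop) (hI : is_ideal I) (I_nz : exists y, I y /\ y <> 0)
  (IJ : forall y, I y -> inJ y)
  (x : Hhat F) (Ix : I x) (x_nz : x <> 0)
  (xmin : forall y, I y -> y <> 0 -> (jdegree x <= jdegree y)%R)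
  (k : nat) (xlev : plevel x = (3 * k)%N) :
  codim_in_J I (2 * (k - 1))%N.
Proof.
have n2 : (2%:R : F) != 0 by move: char2; rewrite inE.
have n3 : (3%:R : F) != 0 by move: char3; rewrite inE.
have xJ : x \is Jle k by apply: plevel_Jle (IJ x Ix) _; rewrite xlev.
case: k xlev xJ => [|K] xlev xJ; first by case: x_nz; apply: Jle0_eq0.
rewrite subn1 /=.
have top : (x@_(HP false K) != 0) || (x@_(HP true K) != 0).
  apply/negPn/negP; rewrite negb_or !negbK => /andP[/eqP x0 /eqP x1].
  have := Jle_plevel (Jle_drop_top xJ); rewrite x0 x1 !scale0r addr0 subr0 xlev.
  by rewrite leq_pmul2l // ltnn.
apply: (codim_in_J_of_leading hI).
- move=> y Iy yJ; have [//|/eqP y0] := eqVneq y 0.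
  by move: (xmin y Iy y0); rewrite leNgt (jdegree_Jle_lt yJ) // xlev.
- have lead := has_leading_top hI (c := fun b => x@_(HP b K)) n3 Ix (Jle_drop_top xJ) top.
  exact: (has_leading_ge hI n2 n3 lead).
Qed.
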